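(* There exists a probability function $w$ on $SL_3$ satisfying Constant Exchangeability and Predicate Exchangeability (Px) but not Strong Predicate Exchangeability (SPx). Concretely, with the atoms of $L_3$ listed in lexicographic order $\alpha_1,\dots,\alpha_8$ and $\vec b=\langle \tfrac1{19},\tfrac2{19},\tfrac4{19},\tfrac5{19},\tfrac2{19},\tfrac3{19},\tfrac1{19},\tfrac1{19}\rangle$, the function $w=\frac16\sum_{\sigma}w_{\sigma\vec b}$ (sum over the six permutations of atoms induced by permutations of the predicates $P_1,P_2,P_3$) satisfies Px, while the state descriptions $\Theta=\alpha_2(a_1)\wedge\alpha_4(a_2)\wedge\alpha_5(a_3)\wedge\alpha_7(a_4)\wedge\alpha_7(a_5)$ and $\Phi=\alpha_3(a_1)\wedge\alpha_5(a_2)\wedge\alpha_6(a_3)\wedge\alpha_6(a_4)\wedge\alpha_7(a_5)$ have the same P-spectrum but $w(\Theta)\neq w(\Phi)$.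
   Context: $L_q$ is the first-order language with unary predicates $P_1,\dots,P_q$ and constants $a_1,a_2,\dots$. Atoms $\alpha(x)=\bigwedge_{i=1}^q\pm P_i(x)$ are ordered lexicographically: $\alpha_1=\bigwedge P_i$, $\alpha_2=P_1\wedge\dots\wedge P_{q-1}\wedge\neg P_q$, etc., up to $\alpha_{2^q}=\bigwedge\neg P_i$. State descriptions are $\bigwedge_{i=1}^n\alpha_{h_i}(a_i)$. For $\vec x=\langle x_1,\dots,x_{2^q}\rangle$ with $x_j\ge0$, $\sum x_j=1$, the de Finetti function $w_{\vec x}$ is the probability function with $w_{\vec x}(\bigwedge_{i=1}^n\alpha_{h_i}(a_i))=\prod_{i=1}^n x_{h_i}$; a permutation $\sigma$ of atoms acts by $(\sigma\vec x)_{\sigma(j)}=x_j$. $\gamma_q(\alpha)$ is the number of negated predicates in $\alpha$. Px: $w$ is invariant under permuting the predicate symbols in sentences. P-spectrum of $\Theta=\bigwedge_k\alpha_{h_k}(a_k)$: for each $i\in\{0,\dots,q\}$, let $M_i$ be the multiset of sizes of the classes of the relation ''$a_k\sim a_l\iff h_k=h_l$'' on the constants whose atom has exactly $i$ negations; the P-spectrum is $\langle M_0,\dots,M_q\rangle$. SPx: $w(\Theta)=w(\Phi)$ whenever $\Theta,\Phi$ are state descriptions for the same constants with the same P-spectrum. *)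

From HB Require Import structures.
From mathcomp Require Import all_boot all_order all_algebra all_fingroup.
Set Implicit Arguments. Unset Strict Implicit. Unset Printing Implicit Defensive.
Import Order.TTheory GRing.Theory Num.Theory.
Local Open Scope ring_scope.

(* The language L_3: predicates P_1,P_2,P_3 indexed by 'I_3.
   An atom is given by its sign pattern: a i = true iff P_(i+1) occurs unnegated. *)
Definition atom := {ffun 'I_3 -> bool}.

Definition gamma (a : atom) : nat := #|[pred i | ~~ a i]|.

(* Lexicographic numbering: the atom alpha_(j+1), for j : 'I_8
   (alpha_1 = P1/\P2/\P3, alpha_2 = P1/\P2/\~P3, ..., alpha_8 = all negated). *)
Definition lex_atom (j : 'I_8) : atom :=
  [ffun i : 'I_3 => ~~ odd (j %/ 2 ^ (2 - i))%N].

(* Inverse numbering: the 0-based lexicographic index of an atom. *)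
Definition lex_index (a : atom) : 'I_8 :=
  inord (\sum_(i < 3) (~~ a i) * 2 ^ (2 - i))%N.

(* A state description  /\_{k=1}^n alpha(a_k)  for constants a_1..a_n is the
   sequence of its atoms. *)
Definition statedesc := seq atom.

Definition wdf (x : atom -> rat) (Th : statedesc) : rat := \prod_(a <- Th) x a.

(* Permutation of atoms induced by a permutation tau of the predicate symbols:
   \/ eps_i P_i  |->  /\ eps_i P_(tau i). *)
Definition patom (tau : {perm 'I_3}) (a : atom) : atom := [ffun i => a ((tau^-1)%g i)].

Definition bnum (j : 'I_8) : nat := nth 0%N [:: 1; 2; 4; 5; 2; 3; 1; 1]%N j.
Definition bvec (a : atom) : rat := (bnum (lex_index a))%:R / 19%:R.

(* sigma b for the atom permutation sigma = patom tau: (sigma b)_(sigma a) = b_a. *)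
Definition permvec (tau : {perm 'I_3}) (x : atom -> rat) (a : atom) : rat :=
  x (patom (tau^-1)%g a).

Definition wb (Th : statedesc) : rat :=
  6%:R^-1 * \sum_(tau : {perm 'I_3}) wdf (permvec tau bvec) Th.

(* Probability function on SL_3, determined by its values on state descriptions
   (for the constants a_1,...,a_n). *)
Definition is_prob (w : statedesc -> rat) : Prop :=
  [/\ w [::] = 1,
      forall Th, 0 <= w Th
    & forall Th, w Th = \sum_(a : atom) w (rcons Th a)].

Definition Ex (w : statedesc -> rat) : Prop :=
  forall Th Ph : statedesc, perm_eq Th Ph -> w Th = w Ph.

Definition Px (w : statedesc -> rat) : Prop :=
  forall (tau : {perm 'I_3}) (Th : statedesc), w (map (patom tau) Th) = w Th.

(* The i-th component M_i of the P-spectrum, as a sorted list (= multiset)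
   of sizes of the classes of constants having the same atom, among those
   whose atom has exactly i negations. *)
Definition pspec (Th : statedesc) (i : 'I_4) : seq nat :=
  sort leq [seq count_mem a Th | a <- undup [seq a <- Th | gamma a == i]].

Definition SPx (w : statedesc -> rat) : Prop :=
  forall Th Ph : statedesc, size Th = size Ph ->
    (forall i, pspec Th i = pspec Ph i) -> w Th = w Ph.

Definition Theta : statedesc :=
  [:: lex_atom (inord 1); lex_atom (inord 3); lex_atom (inord 4);
      lex_atom (inord 6); lex_atom (inord 6)].
Definition Phi : statedesc :=
  [:: lex_atom (inord 2); lex_atom (inord 4); lex_atom (inord 5);
      lex_atom (inord 5); lex_atom (inord 6)].

From HB Require Import structures.
From mathcomp Require Import all_boot all_order all_algebra all_fingroup.
Import Order.TTheory GRing.Theory Num.Theory.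
Local Open Scope ring_scope.

(* Averaging the de Finetti function w_b over the six atom permutations induced
   by permuting P1, P2, P3 yields a mixture of product measures, hence a
   probability function satisfying Ex, which is Px by construction.  SPx would
   moreover force invariance under permutations of atoms that merely preserve
   the number of negations, and b is far from that: Theta and Phi have the same
   P-spectrum, but the averaged products of their weights are 1176 and 984
   (in units of 1 / (6 * 19^5)). *)

Lemma patomM (s t : {perm 'I_3}) a : patom s (patom t a) = patom (t * s)%g a.
Proof. by apply/ffunP => i; rewrite !ffunE invMg permM. Qed.

Lemma patom1 a : patom 1%g a = a.
Proof. by apply/ffunP => i; rewrite !ffunE invg1 perm1. Qed.

Lemma patomK t : cancel (patom t) (patom t^-1).
Proof. by move=> a; rewrite patomM mulgV patom1. Qed.

Lemma patom_inj t : injective (patom t).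
Proof. exact: can_inj (patomK t). Qed.

Section DeFinettiFunction.

Variable x : atom -> rat.

Lemma wdf_rcons Th a : wdf x (rcons Th a) = wdf x Th * x a.
Proof. by rewrite /wdf -cats1 big_cat big_seq1. Qed.

Lemma wdf_perm_eq Th Ph : perm_eq Th Ph -> wdf x Th = wdf x Ph.
Proof. exact: perm_big. Qed.

Lemma wdf_map f Th : wdf x (map f Th) = wdf (x \o f) Th.
Proof. exact: big_map. Qed.

Lemma wdf_ge0 Th : (forall a, 0 <= x a) -> 0 <= wdf x Th.
Proof. by move=> x_ge0; apply: prodr_ge0 => a _. Qed.

End DeFinettiFunction.

Lemma wdf_natr_div (f : atom -> nat) (c : rat) Th :
  wdf (fun a => (f a)%:R / c) Th = (\prod_(a <- Th) f a)%:R / c ^+ size Th.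
Proof.
elim: Th => [|a Th IH]; first by rewrite /wdf !big_nil divr1.
by rewrite /wdf !big_cons -/(wdf _ _) IH natrM exprS invfM mulrACA.
Qed.

Lemma sum_permvec t x : \sum_a permvec t x a = \sum_a x a.
Proof.
by rewrite (reindex_inj (patom_inj t)); under eq_bigr do rewrite /permvec patomK.
Qed.

Lemma permvec_patom s t x a : permvec t x (patom s a) = permvec (t * s^-1)%g x a.
Proof. by rewrite /permvec patomM invMg invgK. Qed.

(* [wb] is, by definition, [wdf_sym bvec]. *)
Definition wdf_sym (x : atom -> rat) (Th : statedesc) : rat :=
  6%:R^-1 * \sum_(t : {perm 'I_3}) wdf (permvec t x) Th.

Lemma wdf_sym_prob x :
  (forall a, 0 <= x a) -> \sum_a x a = 1 -> is_prob (wdf_sym x).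
Proof.
move=> x_ge0 x_sum1; split=> [|Th|Th].
- rewrite /wdf_sym; under eq_bigr do rewrite /wdf big_nil.
  by rewrite sumr_const card_Sn mulVf.
- rewrite mulr_ge0 ?invr_ge0 ?ler0n // sumr_ge0 // => t _.
  by apply: wdf_ge0 => a; apply: x_ge0.
- rewrite /wdf_sym -mulr_sumr exchange_big /=; congr (_ * _).
  apply: eq_bigr => t _; under eq_bigr do rewrite wdf_rcons.
  by rewrite -mulr_sumr sum_permvec x_sum1 mulr1.
Qed.

Lemma wdf_sym_Ex x : Ex (wdf_sym x).
Proof.
by move=> Th Ph eq_ThPh; congr (_ * _); apply: eq_bigr => t _; apply: wdf_perm_eq.
Qed.

Lemma wdf_sym_Px x : Px (wdf_sym x).
Proof.
move=> s Th; congr (_ * _); rewrite [RHS](reindex_inj (mulIg (s^-1)%g)) /=.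
apply: eq_bigr => t _; rewrite wdf_map.
by apply: eq_bigr => a _; rewrite /= permvec_patom.
Qed.

Definition P1 : 'I_3 := @Ordinal 3 0 isT.
Definition P2 : 'I_3 := @Ordinal 3 1 isT.
Definition P3 : 'I_3 := @Ordinal 3 2 isT.

Lemma big_ord3 (F : 'I_3 -> nat) : (\sum_(i < 3) F i = F P1 + F P2 + F P3)%N.
Proof.
rewrite !big_ord_recl big_ord0 addn0 addnA.
by congr (F _ + F _ + F _)%N; apply: val_inj.
Qed.

Definition lex_code (a : atom) : nat := ((~~ a P1) * 4 + (~~ a P2) * 2 + ~~ a P3)%N.

Lemma lex_code_lt a : (lex_code a < 8)%N.
Proof. by rewrite /lex_code; case: (a P1); case: (a P2); case: (a P3). Qed.

Lemma lex_indexE a : lex_index a = lex_code a :> nat.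
Proof. by rewrite /lex_index big_ord3 muln1 inordK ?lex_code_lt. Qed.

Lemma lex_atomK : cancel lex_atom lex_index.
Proof.
move=> j; apply: ord_inj; rewrite lex_indexE /lex_code !ffunE.
by case: j => [[|[|[|[|[|[|[|[|]]]]]]]] ?].
Qed.

Lemma lex_atom_inj : injective lex_atom.
Proof. exact: can_inj lex_atomK. Qed.

Lemma lex_atom_bij : bijective lex_atom.
Proof. by apply: inj_card_bij lex_atom_inj _; rewrite card_ffun card_bool !card_ord. Qed.

Lemma bvec_ge0 a : 0 <= bvec a.
Proof. by rewrite divr_ge0 ?ler0n. Qed.

Lemma sum_bvec : \sum_a bvec a = 1.
Proof.
rewrite (reindex lex_atom) /=; last exact: onW_bij lex_atom_bij.
under eq_bigr do rewrite /bvec lex_atomK.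
by rewrite -mulr_suml -natr_sum !big_ord_recl big_ord0 divff.
Qed.

Definition neg_count (j : 'I_8) : nat := (odd (j %/ 4) + odd (j %/ 2) + odd j)%N.

Lemma gamma_lex_atom j : gamma (lex_atom j) = neg_count j.
Proof.
rewrite /gamma -sum1_card big_mkcond big_ord3 !inE !ffunE /neg_count /= divn1.
by case: (odd (j %/ 4)); case: (odd (j %/ 2)); case: (odd j).
Qed.

Lemma pspec_map (T : eqType) (f : T -> atom) (g : T -> nat) s i :
  injective f -> gamma \o f =1 g ->
  pspec (map f s) i =
    sort leq [seq count_mem y s | y <- undup [seq y <- s | g y == i]].
Proof.
move=> f_inj gamma_f; rewrite /pspec filter_map undup_map_inj // -map_comp.
rewrite (eq_filter (a2 := fun y => g y == i)) => [|y /=]; last by rewrite -gamma_f.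
congr (sort _ _); apply: eq_map => y /=.
by rewrite count_map; apply: eq_count => z /=; rewrite inj_eq.
Qed.

(* Explicit ordinals rather than [inord], which does not reduce under
   [vm_compute] (it is blocked on the opaque [idP]). *)
Lemma ThetaE : Theta = map lex_atom
  [:: @Ordinal 8 1 isT; @Ordinal 8 3 isT; @Ordinal 8 4 isT; @Ordinal 8 6 isT;
      @Ordinal 8 6 isT].
Proof.
by congr [:: lex_atom _; lex_atom _; lex_atom _; lex_atom _; lex_atom _];
  apply: ord_inj; rewrite inordK.
Qed.

Lemma PhiE : Phi = map lex_atom
  [:: @Ordinal 8 2 isT; @Ordinal 8 4 isT; @Ordinal 8 5 isT; @Ordinal 8 5 isT;
      @Ordinal 8 6 isT].
Proof.
by congr [:: lex_atom _; lex_atom _; lex_atom _; lex_atom _; lex_atom _];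
  apply: ord_inj; rewrite inordK.
Qed.

Lemma pspec_Theta_Phi i : pspec Theta i = pspec Phi i.
Proof.
rewrite ThetaE PhiE !(pspec_map _ _ _ _ _ lex_atom_inj gamma_lex_atom).
by case: i => [[|[|[|[|]]]] ?] //; vm_compute.
Qed.

Definition perm_of_tuple n (t : n.-tuple 'I_n) (t_uniq : uniq t) : {perm 'I_n} :=
  perm (elimT (tuple_uniqP t) t_uniq).

Definition S3_enum : seq {perm 'I_3} :=
  [:: @perm_of_tuple 3 [tuple P1; P2; P3] isT; @perm_of_tuple 3 [tuple P1; P3; P2] isT;
      @perm_of_tuple 3 [tuple P2; P1; P3] isT; @perm_of_tuple 3 [tuple P2; P3; P1] isT;
      @perm_of_tuple 3 [tuple P3; P1; P2] isT; @perm_of_tuple 3 [tuple P3; P2; P1] isT].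

Lemma S3_enum_uniq : uniq S3_enum.
Proof.
apply: (@map_uniq _ _ (fun t : {perm 'I_3} => (nat_of_ord (t P1), nat_of_ord (t P2)))).
by rewrite /= !permE.
Qed.

Lemma mem_S3_enum t : t \in S3_enum.
Proof.
have card_S3_enum : #|S3_enum| = #|{perm 'I_3}|.
  by rewrite (card_uniqP S3_enum_uniq) card_Sn.
by rewrite (subset_cardP card_S3_enum (subset_predT _)).
Qed.

Lemma big_S3_enum (F : {perm 'I_3} -> rat) : \sum_t F t = \sum_(t <- S3_enum) F t.
Proof. by rewrite (big_uniq _ S3_enum_uniq); apply: eq_bigl => t; rewrite mem_S3_enum. Qed.

Lemma wb_natE Th : wb Th = 6%:R^-1 *
  ((\sum_(t <- S3_enum) \prod_(a <- Th) bnum (lex_index (patom t^-1 a)))%:R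
     / 19%:R ^+ size Th).
Proof.
rewrite /wb big_S3_enum natr_sum mulr_suml; congr (_ * _); apply: eq_bigr => t _.
exact: wdf_natr_div.
Qed.

Lemma Theta_weight :
  (\sum_(t <- S3_enum) \prod_(a <- Theta) bnum (lex_index (patom t^-1 a)))%N = 1176%N.
Proof.
rewrite ThetaE /S3_enum !big_cons !big_nil /bnum !lex_indexE /lex_code.
by rewrite !ffunE !invgK !permE; vm_compute.
Qed.

Lemma Phi_weight :
  (\sum_(t <- S3_enum) \prod_(a <- Phi) bnum (lex_index (patom t^-1 a)))%N = 984%N.
Proof.
rewrite PhiE /S3_enum !big_cons !big_nil /bnum !lex_indexE /lex_code.
by rewrite !ffunE !invgK !permE; vm_compute.
Qed.

Lemma wb_Theta : wb Theta = 6%:R^-1 * (1176%:R / 19%:R ^+ 5).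
Proof. by rewrite wb_natE Theta_weight. Qed.

Lemma wb_Phi : wb Phi = 6%:R^-1 * (984%:R / 19%:R ^+ 5).
Proof. by rewrite wb_natE Phi_weight. Qed.

Lemma wb_Theta_neq_Phi : wb Theta <> wb Phi.
Proof.
have inv6_neq0 : (6%:R : rat)^-1 != 0 by rewrite invr_eq0 pnatr_eq0.
have inv19X5_neq0 : (19%:R ^+ 5 : rat)^-1 != 0 by rewrite invr_eq0 expf_neq0 ?pnatr_eq0.
by rewrite wb_Theta wb_Phi => /(mulfI inv6_neq0)/(mulIf inv19X5_neq0)/eqP; rewrite eqr_nat.
Qed.

Theorem mainTheorem2 :
  (exists w : statedesc -> rat, [/\ is_prob w, Ex w, Px w & ~ SPx w]) /\
  [/\ is_prob wb, Ex wb, Px wb,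
      (forall i, pspec Theta i = pspec Phi i) & wb Theta <> wb Phi].
Proof.
have wb_prob : is_prob wb := @wdf_sym_prob bvec bvec_ge0 sum_bvec.
have wb_Ex : Ex wb := @wdf_sym_Ex bvec.
have wb_Px : Px wb := @wdf_sym_Px bvec.
have wb_not_SPx : ~ SPx wb.
  by move=> wb_SPx; apply/wb_Theta_neq_Phi/wb_SPx/pspec_Theta_Phi.
split; first by exists wb.
by split; [| | | exact: pspec_Theta_Phi | exact: wb_Theta_neq_Phi].
Qed.
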